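(* Let $P,Q\in\mathbb P_d$ and $R=(1-t)P^{-1}+tQ^{-1}$ for some $t\in[0,1]$. Then $\operatorname{F}_R(P,Q)=\operatorname{F}^{\mathrm M}(P,Q)$.
   Context: $\mathbb P_d$ is the set of $d\times d$ complex positive definite matrices; $A\#B:=A^{1/2}(A^{-1/2}BA^{-1/2})^{1/2}A^{1/2}$. The generalized fidelity is $\operatorname{F}_R(P,Q):=\operatorname{Tr}\big[\sqrt{R^{1/2}PR^{1/2}}\,R^{-1}\sqrt{R^{1/2}QR^{1/2}}\big]$, and the Matsumoto fidelity is $\operatorname{F}^{\mathrm M}(P,Q):=\operatorname{Tr}[P\#Q]$. *)

From mathcomp Require Import all_boot all_order all_algebra.
From mathcomp Require Import complex.
From Stdlib Require Import ClassicalEpsilon.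
Set Implicit Arguments. Unset Strict Implicit. Unset Printing Implicit Defensive.
Import Order.TTheory GRing.Theory Num.Theory.
Local Open Scope ring_scope.

Section Defs.
Variable R : rcfType.
Local Notation C := R[i].

Definition adjmx (m n : nat) (A : 'M[C]_(m, n)) : 'M[C]_(n, m) :=
  (map_mx Num.conj A)^T.

Definition hermitian (d : nat) (A : 'M[C]_d) : Prop := adjmx A = A.

Definition posdef (d : nat) (A : 'M[C]_d) : Prop :=
  hermitian A /\
  forall v : 'cV[C]_d, v != 0 -> 0 < (adjmx v *m A *m v) ord0 ord0.

Definition possemidef (d : nat) (A : 'M[C]_d) : Prop :=
  hermitian A /\
  forall v : 'cV[C]_d, 0 <= (adjmx v *m A *m v) ord0 ord0.

(* the (unique) positive semidefinite square root of A (chosen by epsilon;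
   meaningful for A positive semidefinite) *)
Definition msqrt (d : nat) (A : 'M[C]_d) : 'M[C]_d :=
  epsilon (inhabits 0) (fun S : 'M[C]_d => possemidef S /\ S *m S = A).

Definition gmean (d : nat) (A B : 'M[C]_d) : 'M[C]_d :=
  msqrt A *m msqrt (invmx (msqrt A) *m B *m invmx (msqrt A)) *m msqrt A.

Definition genfid (d : nat) (Rm P Q : 'M[C]_d) : C :=
  \tr (msqrt (msqrt Rm *m P *m msqrt Rm) *m invmx Rm
        *m msqrt (msqrt Rm *m Q *m msqrt Rm)).

Definition matsfid (d : nat) (P Q : 'M[C]_d) : C := \tr (gmean P Q).

End Defs.

From Pilot Require Import Defs.
From mathcomp Require Import all_boot all_order all_algebra.
From mathcomp Require Import complex sesquilinear spectral ring.
From Stdlib Require Import ClassicalEpsilon.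
Import Order.TTheory GRing.Theory Num.Theory.
Set Implicit Arguments. Unset Strict Implicit. Unset Printing Implicit Defensive.
Local Open Scope ring_scope.

(* P and Q are simultaneously congruent to diagonal matrices: with P^(1/2)
   and P^(-1/2) Q P^(-1/2) = V^H D^2 V (V unitary, D > 0 diagonal), the
   matrix B = P^(1/2) V^H gives P = B B^H, Q = B D^2 B^H and P # Q = B D B^H.
   The weight R is then B^-H W B^-1 with W = (1 - t) + t D^-2 diagonal and
   positive. For every such R the square roots in F_R(P, Q) are explicit:
   if F >= 0 is diagonal with F W F = E, then R^(1/2) B F B^H R^(1/2) is the
   square root of R^(1/2) B E B^H R^(1/2), because B^H R B = W. Taking
   F = W^(-1/2) for P and F = D W^(-1/2) for Q, the trace in F_R(P, Q)
   collapses to tr(B D B^H) = tr(P # Q). *)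

Section MatrixAlgebra.
Variable F : comUnitRingType.

Lemma invmx_eq n (A B : 'M[F]_n) : A *m B = 1%:M -> invmx A = B.
Proof.
move=> AB; have [Au _] := mulmx1_unit AB.
by rewrite -[invmx A]mulmx1 -AB mulmxA mulVmx // mul1mx.
Qed.

Lemma invmxM n (A B : 'M[F]_n) : A \in unitmx -> B \in unitmx ->
  invmx (A *m B) = invmx B *m invmx A.
Proof.
move=> Au Bu; apply: invmx_eq.
by rewrite -mulmxA (mulmxA B) mulmxV // mul1mx mulmxV.
Qed.

Lemma add_scale_invmx_congr n (a b : F) (B B' K D : 'M[F]_n) :
  B \in unitmx -> B' \in unitmx -> K \in unitmx -> a%:M + b *: invmx K = D ->
  a *: invmx (B *m B') + b *: invmx (B *m K *m B') = invmx B' *m D *m invmx B.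
Proof.
move=> B_unit B'_unit K_unit <-.
rewrite !invmxM ?unitmx_mul ?B_unit ?K_unit // mulmxDr mulmxDl mul_mx_scalar.
by rewrite -scalemxAl -scalemxAr -scalemxAl !mulmxA.
Qed.

Lemma mxtrace_sandwich n (r X Y : 'M[F]_n) : r \in unitmx ->
  \tr (r *m X *m r *m invmx (r *m r) *m (r *m Y *m r)) = \tr (r *m r *m X *m Y).
Proof.
move=> r_unit; rewrite invmxM // !mulmxA mulmxK // mulmxKV //.
by rewrite mxtrace_mulC !mulmxA.
Qed.

Lemma mxtrace_sandwich_congr n (r W B B' H K D G : 'M[F]_n) :
  r \in unitmx -> B \in unitmx -> B' \in unitmx ->
  r *m r = W -> W = invmx B' *m D *m invmx B -> K *m D *m H = G ->
  \tr (r *m (B *m H *m B') *m r *m invmx W *m (r *m (B *m K *m B') *m r))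
  = \tr (B *m G *m B').
Proof.
move=> r_unit B_unit B'_unit <- rrE <-; rewrite mxtrace_sandwich // rrE.
rewrite !mulmxA mulmxKV // mxtrace_mulC !mulmxA mulmxV // mul1mx.
by rewrite mxtrace_mulC !mulmxA mxtrace_mulC !mulmxA.
Qed.

End MatrixAlgebra.

Section ComplexMatrix.
Variable R : rcfType.
Local Notation C := R[i].
Implicit Types (m n : nat).

Lemma adjmx_mul m n p (A : 'M[C]_(m, n)) (B : 'M[C]_(n, p)) :
  adjmx (A *m B) = adjmx B *m adjmx A.
Proof. by rewrite /adjmx map_mxM trmx_mul. Qed.

Lemma adjmxK m n (A : 'M[C]_(m, n)) : adjmx (adjmx A) = A.
Proof. by apply/matrixP => i j; rewrite !mxE conjCK. Qed.

Lemma adjmx_inv n (A : 'M[C]_n) : adjmx (invmx A) = invmx (adjmx A).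
Proof. by rewrite /adjmx map_invmx trmx_inv. Qed.

Lemma adjmx_trmxC m n (A : 'M[C]_(m, n)) : adjmx A = (A ^t* )%sesqui.
Proof. by rewrite /adjmx map_trmx. Qed.

Lemma unitmx_adjmx n (A : 'M[C]_n) : (adjmx A \in unitmx) = (A \in unitmx).
Proof. by rewrite /adjmx unitmx_tr map_unitmx. Qed.

Definition diagf n (f : 'I_n -> C) : 'M[C]_n := diag_mx (\row_i f i).

Lemma eq_diagf n (f g : 'I_n -> C) : f =1 g -> diagf f = diagf g.
Proof. by move=> fg; congr diag_mx; apply/rowP => i; rewrite !mxE fg. Qed.

Lemma diagf1 n : diagf (fun _ : 'I_n => 1) = 1%:M.
Proof. by apply/matrixP => i j; rewrite !mxE. Qed.

Lemma mul_diagf n (f g : 'I_n -> C) :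
  diagf f *m diagf g = diagf (fun i => f i * g i).
Proof. by rewrite mulmx_diag; congr diag_mx; apply/rowP => i; rewrite !mxE. Qed.

Lemma scalar_add_diagf n (a b : C) (f : 'I_n -> C) :
  a%:M + b *: diagf f = diagf (fun i => a + b * f i).
Proof.
apply/matrixP => i j; rewrite !mxE; case: eqP => _.
  by rewrite !mulr1n.
by rewrite !mulr0n mulr0 addr0.
Qed.

Lemma adjmx_diagf n (f : 'I_n -> C) : adjmx (diagf f) = diagf (fun i => (f i)^*).
Proof.
apply/matrixP => i j; rewrite !mxE eq_sym.
by case: eqP => [->|_]; rewrite ?mulr1n ?mulr0n ?rmorph0.
Qed.

Lemma unitmx_diagf n (f : 'I_n -> C) :
  (diagf f \in unitmx) = [forall i, f i != 0].
Proof.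
rewrite unitmxE det_diag unitfE.
apply/prodf_neq0/forallP => nz i; first by have := nz i isT; rewrite mxE.
by rewrite mxE.
Qed.

Lemma invmx_diagf n (f : 'I_n -> C) : (forall i, f i != 0) ->
  invmx (diagf f) = diagf (fun i => (f i)^-1).
Proof.
move=> nz; apply: invmx_eq; rewrite mul_diagf -diagf1.
by apply: eq_diagf => i; rewrite mulfV.
Qed.

Lemma form_diagf n (f : 'I_n -> C) (v : 'cV[C]_n) :
  (adjmx v *m diagf f *m v) 0 0 = \sum_i f i * `|v i 0| ^+ 2.
Proof.
rewrite /diagf mul_mx_diag !mxE.
by apply: eq_bigr => j _; rewrite !mxE normCKC mulrCA mulrA.
Qed.

Lemma col_mul_diagf m n (A : 'M[C]_(m, n)) (f : 'I_n -> C) j :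
  col j (A *m diagf f) = f j *: col j A.
Proof. by apply/matrixP => i k; rewrite /diagf mul_mx_diag !mxE mulrC. Qed.

Lemma diagf_row n (d : 'rV[C]_n) : diagf (fun i => d 0 i) = diag_mx d.
Proof. by congr diag_mx; apply/rowP => i; rewrite !mxE. Qed.

Lemma form_congr m n (K : 'M[C]_m) (B : 'M[C]_(m, n)) (v : 'cV[C]_n) :
  adjmx v *m (adjmx B *m K *m B) *m v = adjmx (B *m v) *m K *m (B *m v).
Proof. by rewrite adjmx_mul !mulmxA. Qed.

Lemma form_self_sum n (u : 'cV[C]_n) :
  (adjmx u *m u) 0 0 = \sum_i `|u i 0| ^+ 2.
Proof. by rewrite mxE; apply: eq_bigr => i _; rewrite !mxE normCKC. Qed.

Lemma form_self_ge0 n (u : 'cV[C]_n) : 0 <= (adjmx u *m u) 0 0.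
Proof. by rewrite form_self_sum; apply: sumr_ge0 => i _; apply: exprn_ge0. Qed.

Lemma form_self_eq0 n (u : 'cV[C]_n) : (adjmx u *m u) 0 0 = 0 -> u = 0.
Proof.
rewrite form_self_sum => /psumr_eq0P u0; apply/matrixP => i j.
rewrite ord1 mxE; apply/eqP.
by rewrite -normr_eq0 -sqrf_eq0 u0 // => k _; apply: exprn_ge0.
Qed.

Lemma posdef_possemidef n (A : 'M[C]_n) : posdef A -> possemidef A.
Proof.
move=> [hA pA]; split => // v; have [->|v_neq0] := eqVneq v 0.
  by rewrite mulmx0 mxE.
exact: ltW (pA v v_neq0).
Qed.

Lemma posdef_unitmx n (A : 'M[C]_n) : posdef A -> A \in unitmx.
Proof.
move=> [_ pA]; rewrite unitmxE unitfE; apply/det0P => -[u u_neq0 uA].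
have /pA : adjmx u != 0.
  apply: contraNneq u_neq0 => u0; rewrite -[u]adjmxK u0.
  by apply/eqP/matrixP => i j; rewrite !mxE conjC0.
by rewrite adjmxK uA mul0mx mxE ltxx.
Qed.

Lemma possemidef_congr m n (K : 'M[C]_m) (B : 'M[C]_(m, n)) :
  possemidef K -> possemidef (adjmx B *m K *m B).
Proof.
move=> [hK pK]; split.
  by rewrite /Defs.hermitian !adjmx_mul adjmxK hK mulmxA.
by move=> v; rewrite form_congr.
Qed.

Lemma possemidef_congr_diagf m n (B : 'M[C]_(m, n)) (f : 'I_m -> C) :
  (forall i, 0 <= f i) -> possemidef (adjmx B *m diagf f *m B).
Proof.
move=> f_ge0; apply: possemidef_congr; split.
  rewrite /Defs.hermitian adjmx_diagf; apply: eq_diagf => i.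
  by apply: conj_Creal; apply: ger0_real.
by move=> v; rewrite form_diagf; apply: sumr_ge0 => i _; rewrite mulr_ge0 ?exprn_ge0.
Qed.

Lemma hermitian_spectral n (A : 'M[C]_n) : Defs.hermitian A ->
  exists (U : 'M[C]_n) (f : 'I_n -> C),
    [/\ U *m adjmx U = 1%:M, forall i, f i \is Num.real
      & A = adjmx U *m diagf f *m U].
Proof.
move=> hA; have hsA : A \is @hermitianmx _ n false Num.conj.
  by apply/is_hermitianmxP; rewrite expr0 scale1r -adjmx_trmxC hA.
have /orthomx_spectralP AE := hermitian_normalmx hsA.
have Uu := spectral_unitarymx A.
exists (spectralmx A), (fun i => spectral_diag A 0 i); split.
- by rewrite adjmx_trmxC; apply/unitarymxP.
- by move=> i; apply: (mxOverP (hermitian_spectral_diag_real hsA)).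
- by rewrite diagf_row adjmx_trmxC -invmx_unitary.
Qed.

Lemma possemidef_spectral n (A : 'M[C]_n) : possemidef A ->
  exists (U : 'M[C]_n) (f : 'I_n -> C),
    [/\ U *m adjmx U = 1%:M, forall i, 0 <= f i
      & A = adjmx U *m diagf f *m U].
Proof.
move=> [hA pA]; have [U [f [UU _ AE]]] := hermitian_spectral hA.
exists U, f; split => // i.
pose e := delta_mx i (0 : 'I_1) : 'cV[C]_n.
have Ue : U *m (adjmx U *m e) = e by rewrite mulmxA UU mul1mx.
have := pA (adjmx U *m e); rewrite AE form_congr Ue form_diagf (bigD1 i) //=.
rewrite big1 ?addr0.
  by rewrite mxE !eqxx normr1 expr1n mulr1.
by move=> j /negbTE ji; rewrite mxE ji normr0 expr0n mulr0.
Qed.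

Lemma possemidef_sqrt n (A : 'M[C]_n) : possemidef A ->
  exists S, possemidef S /\ S *m S = A.
Proof.
move=> /possemidef_spectral [U [f [UU f_ge0 ->]]].
exists (adjmx U *m diagf (fun i => sqrtC (f i)) *m U); split.
  by apply: possemidef_congr_diagf => i; rewrite sqrtC_ge0.
rewrite -!mulmxA (mulmxA U) UU mul1mx (mulmxA (diagf _)) mul_diagf !mulmxA.
by congr (_ *m _ *m _); apply: eq_diagf => i; rewrite -expr2 sqrtCK.
Qed.

Lemma msqrt_spec n (A : 'M[C]_n) : possemidef A ->
  possemidef (msqrt A) /\ msqrt A *m msqrt A = A.
Proof. by move=> /possemidef_sqrt; apply: epsilon_spec. Qed.

Lemma possemidef_sqr_eigen n (S : 'M[C]_n) (c : 'cV[C]_n) (l : C) :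
  possemidef S -> 0 <= l -> S *m (S *m c) = l ^+ 2 *: c -> S *m c = l *: c.
Proof.
move=> [hS pS] l_ge0 SSc; apply/eqP; rewrite -subr_eq0; apply/eqP.
set u := S *m c - l *: c.
have Su : S *m u = - l *: u.
  by rewrite /u mulmxBr SSc -scalemxAr scalerBr !scaleNr opprK scalerA addrC.
apply: form_self_eq0; have [l0|l_neq0] := eqVneq l 0.
  have uE : u = S *m c by rewrite /u l0 scale0r subr0.
  by rewrite {1}uE adjmx_mul hS -mulmxA Su l0 oppr0 scale0r mulmx0 mxE.
(* [u^* S u = - l u^* u] is nonnegative, which forces [u^* u = 0] when [l > 0]. *)
have := pS u; rewrite -mulmxA Su -scalemxAr mxE mulNr oppr_ge0 => le0.
have : l * (adjmx u *m u) 0 0 == 0 by rewrite eq_le le0 mulr_ge0 ?form_self_ge0.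
by rewrite mulf_eq0 (negbTE l_neq0) => /eqP.
Qed.

Lemma col_mulmx m n p (A : 'M[C]_(m, n)) (B : 'M[C]_(n, p)) j :
  col j (A *m B) = A *m col j B.
Proof. by rewrite !colE mulmxA. Qed.

Lemma possemidef_sqr_inj n (S T : 'M[C]_n) : possemidef S -> possemidef T ->
  S *m S = T *m T -> S = T.
Proof.
move=> pS pT SST; have [U [f [UU f_ge0 TE]]] := possemidef_spectral pT.
have TU : T *m adjmx U = adjmx U *m diagf f by rewrite TE -mulmxA UU mulmx1.
have SU : S *m adjmx U = adjmx U *m diagf f.
  apply/matrixP => i j; suff /matrixP/(_ i 0) :
    S *m col j (adjmx U) = col j (adjmx U *m diagf f) by rewrite -col_mulmx !mxE.
  rewrite col_mul_diagf; apply: possemidef_sqr_eigen => //.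
  rewrite mulmxA SST -mulmxA -col_mulmx TU col_mul_diagf -scalemxAr.
  by rewrite -col_mulmx TU col_mul_diagf scalerA expr2.
by rewrite -[S]mulmx1 -(mulmx1C UU) mulmxA SU TE.
Qed.

Lemma msqrt_unique n (A S : 'M[C]_n) :
  possemidef S -> S *m S = A -> msqrt A = S.
Proof.
move=> pS SSA; have [pR RRA] := epsilon_spec (inhabits 0)
  (fun S => possemidef S /\ S *m S = A) (ex_intro _ S (conj pS SSA)).
by apply: possemidef_sqr_inj => //; rewrite RRA SSA.
Qed.

Lemma msqrt_congr_diagf n (B r : 'M[C]_n) (w e f : 'I_n -> C) :
  B \in unitmx -> possemidef r -> r *m r = adjmx (invmx B) *m diagf w *m invmx B ->
  (forall i, 0 <= f i) -> (forall i, f i * w i * f i = e i) ->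
  msqrt (r *m (B *m diagf e *m adjmx B) *m r) = r *m (B *m diagf f *m adjmx B) *m r.
Proof.
move=> B_unit r_psd r_sqr f_ge0 fwf; apply: msqrt_unique.
  have -> : r *m (B *m diagf f *m adjmx B) *m r
          = adjmx (adjmx B *m r) *m diagf f *m (adjmx B *m r).
    by rewrite adjmx_mul adjmxK (proj1 r_psd) !mulmxA.
  exact: possemidef_congr_diagf.
have fWf : diagf f *m (adjmx B *m (r *m r) *m B) *m diagf f = diagf e.
  rewrite r_sqr adjmx_inv !mulmxA mulmxK ?unitmx_adjmx // mulmxKV //.
  by rewrite !mul_diagf; apply: eq_diagf.
transitivity (r *m B *m (diagf f *m (adjmx B *m (r *m r) *m B) *m diagf f)
                *m adjmx B *m r); first by rewrite !mulmxA.
by rewrite fWf !mulmxA.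
Qed.

Lemma genfid_congr_diagf n (B : 'M[C]_n) (w g : 'I_n -> C) :
  B \in unitmx -> (forall i, 0 < w i) -> (forall i, 0 <= g i) ->
  genfid (adjmx (invmx B) *m diagf w *m invmx B)
         (B *m adjmx B) (B *m diagf (fun i => g i ^+ 2) *m adjmx B)
  = \tr (B *m diagf g *m adjmx B).
Proof.
move=> Bu w_gt0 g_ge0; rewrite /genfid.
set W := adjmx (invmx B) *m diagf w *m invmx B.
have w_neq0 i : w i != 0 by rewrite gt_eqF.
have [r_psd r_sqr] : possemidef (msqrt W) /\ msqrt W *m msqrt W = W.
  by apply/msqrt_spec/possemidef_congr_diagf => i; apply: ltW.
set r := msqrt W in r_psd r_sqr *.
have r_unit : r \in unitmx.
  have : W \in unitmx.
    rewrite !unitmx_mul unitmx_adjmx unitmx_inv Bu unitmx_diagf andbT.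
    by apply/forallP.
  by rewrite -r_sqr unitmx_mul => /andP[].
pose h i : C := (sqrtC (w i))^-1.
have hwh i : h i * w i * h i = 1.
  by rewrite /h mulrAC -expr2 exprVn sqrtCK mulVf.
have h_ge0 i : 0 <= h i by rewrite /h invr_ge0 sqrtC_ge0 ltW.
have -> : B *m adjmx B = B *m diagf (fun=> 1) *m adjmx B by rewrite diagf1 mulmx1.
pose gh i : C := g i * h i.
have gh_ge0 i : 0 <= gh i by rewrite mulr_ge0.
have ghwgh i : gh i * w i * gh i = g i ^+ 2.
  by rewrite -[g i ^+ 2]mulr1 -(hwh i) /gh; ring.
(* Rewriting with [msqrt_congr_diagf] would be very slow: every failed match
   unifies two diagonal matrices up to conversion. *)
transitivity (\tr (r *m (B *m diagf h *m adjmx B) *m r *m invmx W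
                    *m (r *m (B *m diagf gh *m adjmx B) *m r))).
  congr (\tr (_ *m _ *m _)).
    exact: (msqrt_congr_diagf Bu r_psd r_sqr h_ge0 hwh).
  exact: (msqrt_congr_diagf Bu r_psd r_sqr gh_ge0 ghwgh).
apply: (mxtrace_sandwich_congr r_unit Bu _ r_sqr); first by rewrite unitmx_adjmx.
  by rewrite /W adjmx_inv.
rewrite !mul_diagf; apply: eq_diagf => i.
by rewrite /gh -!mulrA (mulrA (h i)) hwh mulr1.
Qed.

Lemma gmean_congr_diagf n (P Q : 'M[C]_n) : posdef P -> posdef Q ->
  exists (B : 'M[C]_n) (g : 'I_n -> C),
    [/\ B \in unitmx, forall i, 0 < g i, P = B *m adjmx B,
        Q = B *m diagf (fun i => g i ^+ 2) *m adjmx B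
      & gmean P Q = B *m diagf g *m adjmx B].
Proof.
move=> pdP pdQ; rewrite /gmean.
have [p_psd p_sqr] := msqrt_spec (posdef_possemidef pdP).
set p := msqrt P in p_psd p_sqr *.
have p_unit : p \in unitmx.
  by have := posdef_unitmx pdP; rewrite -p_sqr unitmx_mul => /andP[].
have pi_herm : adjmx (invmx p) = invmx p by rewrite adjmx_inv (proj1 p_psd).
have [G_psd G_sqr] : possemidef (msqrt (invmx p *m Q *m invmx p))
    /\ msqrt (invmx p *m Q *m invmx p) *m msqrt (invmx p *m Q *m invmx p)
       = invmx p *m Q *m invmx p.
  apply: msqrt_spec; rewrite -{1}pi_herm.
  exact/possemidef_congr/posdef_possemidef.
set G := msqrt _ in G_psd G_sqr *.
have [V [g [VV g_ge0 GE]]] := possemidef_spectral G_psd.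
have [_ adjV_unit] := mulmx1_unit VV.
have QE : Q = p *m (invmx p *m Q *m invmx p) *m p.
  by rewrite !mulmxA mulmxV // mul1mx mulmxKV.
have g_gt0 i : 0 < g i.
  have : G \in unitmx.
    have := posdef_unitmx pdQ; rewrite QE -G_sqr !unitmx_mul.
    by case/andP => /andP[_ /andP[]].
  rewrite GE !unitmx_mul unitmx_diagf => /andP[/andP[_ /forallP/(_ i) gi_neq0] _].
  by rewrite lt_def gi_neq0 g_ge0.
have adjB : adjmx (p *m adjmx V) = V *m p by rewrite adjmx_mul adjmxK (proj1 p_psd).
exists (p *m adjmx V), g; split => //; rewrite ?adjB.
- by rewrite unitmx_mul p_unit.
- by rewrite -mulmxA (mulmxA (adjmx V)) (mulmx1C VV) mul1mx p_sqr.
- rewrite {1}QE -G_sqr GE.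
  rewrite !mulmxA -(mulmxA _ V (adjmx V)) VV mulmx1.
  by rewrite -(mulmxA _ (diagf g) (diagf g)) mul_diagf.
- by rewrite GE !mulmxA.
Qed.

Lemma add_scale_invmx_congr_diagf n (a b : C) (B : 'M[C]_n) (g : 'I_n -> C) :
  B \in unitmx -> (forall i, g i != 0) ->
  a *: invmx (B *m adjmx B) + b *: invmx (B *m diagf g *m adjmx B)
  = adjmx (invmx B) *m diagf (fun i => a + b * (g i)^-1) *m invmx B.
Proof.
move=> B_unit g_neq0.
have g_unit : diagf g \in unitmx by rewrite unitmx_diagf; apply/forallP.
have adjB_unit : adjmx B \in unitmx by rewrite unitmx_adjmx.
have D_diag : a%:M + b *: invmx (diagf g) = diagf (fun i => a + b * (g i)^-1).
  by rewrite (invmx_diagf g_neq0) scalar_add_diagf.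
by rewrite (add_scale_invmx_congr B_unit adjB_unit g_unit D_diag) adjmx_inv.
Qed.

End ComplexMatrix.

Local Open Scope complex_scope.

Lemma convex_combination_gt0 (R : rcfType) (t : R) (a b : R[i]) :
  0 <= t <= 1 -> 0 < a -> 0 < b -> 0 < (1 - t)%:C * a + t%:C * b.
Proof.
move=> /andP[t_ge0 t_le1] a_gt0 b_gt0; have [->|t_neq0] := eqVneq t 0.
  by rewrite subr0 rmorph1 rmorph0 mul1r mul0r addr0.
have ct_ge0 : 0 <= (1 - t)%:C by rewrite -(rmorph0 (real_complex R)) lecR subr_ge0.
have t_gt0 : 0 < t%:C by rewrite -(rmorph0 (real_complex R)) ltcR lt_def t_neq0.
by rewrite ltr_wpDl ?mulr_gt0 // mulr_ge0 // ltW.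
Qed.

Theorem mainTheorem11 (R : rcfType) (d : nat) (P Q : 'M[R[i]]_d) (t : R) :
  posdef P -> posdef Q -> 0 <= t <= 1 ->
  genfid ((1 - t)%:C *: invmx P + t%:C *: invmx Q) P Q = matsfid P Q.
Proof.
move=> pdP pdQ t01.
have [B [g [B_unit g_gt0 PE QE gPQ]]] := gmean_congr_diagf pdP pdQ.
have g2_neq0 i : g i ^+ 2 != 0 by rewrite expf_neq0 ?gt_eqF.
rewrite /matsfid gPQ PE QE (add_scale_invmx_congr_diagf _ _ B_unit g2_neq0).
apply: genfid_congr_diagf => // [i|i]; last exact: ltW.
rewrite -[(1 - t)%:C]mulr1; apply: convex_combination_gt0 => //.
by rewrite invr_gt0 exprn_gt0.
Qed.
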